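(* Let $Q$ be a nonrecursive connected query, let $a$ be the maximum radius of a rule of $\Pi_Q$, and let $\mathbf T$ be the set of time points occurring in $\Pi_Q$. Let $\tau_a$ be a time point and let $\tau_0$ be the maximum of $\tau_a$ and the elements of $\mathbf T$. For every dataset $D'$, predicate $P$, tuple of objects $\vec o$ and time point $\tau\le\tau_0+a\cdot(\mathrm{rank}(\Pi_Q)-\mathrm{rank}(P))$: if $\Pi_Q\cup D'\models P(\vec o,\tau)$, then $\Pi_Q\cup D''\models P(\vec o,\tau)$, where $D''$ consists of the rigid facts of $D'$ and the temporal facts of $D'$ whose time argument $\tau'$ satisfies $\tau'\le\tau_0+\mathrm{rad}(\Pi_Q)$.
   Context: Temporal Datalog. Constants are partitioned into objects and integer time points; variables into object variables and time variables. A time term is a time point, a time variable, or an expression $t+k$ with $t$ a time variable and $k\in\mathbb{Z}$. Each predicate is either extensional (EDB) or intensional (IDB) and has an arity $n\ge0$, each position being of object sort or time sort; a predicate is rigid if all its positions are of object sort, and temporal if its last position is of time sort and all others are of object sort. An atom $P(t_1,\dots,t_n)$ has terms of the required sorts. A rule is $\bigwedge_i\alpha_i\to\alpha$ with $\alpha$ and all $\alpha_i$ rigid or temporal atoms, $\alpha$ IDB whenever the body is nonempty, and every head variable occurring in the body. A program is a finite set of rules. A fact is a ground rigid or temporal atom without $+$ (identified with the rule $\top\to\alpha$); a dataset is a finite set of EDB facts. Rules are read as universally quantified first-order sentences with $+$ interpreted as integer addition; $\Pi\models\alpha$ denotes entailment. A query is $Q=\langle P_Q,\Pi_Q\rangle$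 with $\Pi_Q$ a program and $P_Q$ an IDB predicate of $\Pi_Q$. Predicate $P$ depends on $P'$ in $\Pi$ if some rule of $\Pi$ has $P$ in the head and $P'$ in the body; $\Pi$ (or a query with program $\Pi$) is nonrecursive if the graph of this dependency relation is acyclic. $\mathrm{rank}(P)=\mathrm{rank}(P,\Pi_Q)$ is $0$ if $P$ does not occur in a rule head of $\Pi_Q$, and otherwise the maximum of $\mathrm{rank}(P')+1$ over predicates $P'$ on which $P$ depends; $\mathrm{rank}(\Pi_Q)$ is the maximum rank of a predicate of $\Pi_Q$. A rule is connected if it contains at most one time variable and, if a time variable occurs in the body, it also occurs in the head; a query is connected if all its rules are. For a time term $s$, $\Delta(s)=k$ if $s=t+k$ with $t$ a variable, and $\Delta(s)=0$ otherwise. The radius of a connected rule $r$ mentioning a time variable is the maximum of $|\Delta(s)-\Delta(s')|$ where $s$ is the time argument of the head and $s'$ the time argument of a body atom of $r$. The radius $\mathrm{rad}(\Pi)$ of a connected program is the number of rules of $\Pi$ times the maximum radius of a rule of $\Pi$. *)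

From Stdlib Require Import ZArith List Bool Relations.
Import ListNotations.
Set Implicit Arguments.

Definition obj := nat.
Definition ovar := nat.
Definition tvar := nat.

(** A predicate carries its signature: [parity] object positions, and
    (if [ptemporal]) one extra final time position; [pedb] = EDB flag.
    Only rigid/temporal predicates can occur in atoms, so no other
    sort patterns are needed. *)
Record predicate := Pred { pname : nat; parity : nat; ptemporal : bool; pedb : bool }.

Definition pred_eq_dec (p q : predicate) : {p = q} + {p <> q}.
Proof. repeat decide equality. Defined.

Inductive oterm := OConst (o : obj) | OVar (x : ovar).
Inductive tterm := TConst (z : Z) | TVar (t : tvar) | TPlus (t : tvar) (k : Z).

Record atom := Atom { apred : predicate; aobjs : list oterm; atime : option tterm }.

Definition wf_atom (a : atom) : Prop :=
  length (aobjs a) = parity (apred a) /\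
  match atime a with
  | None => ptemporal (apred a) = false
  | Some _ => ptemporal (apred a) = true
  end.

Definition ovars_atom (a : atom) : list ovar :=
  flat_map (fun t => match t with OVar x => [x] | OConst _ => [] end) (aobjs a).
Definition tvars_atom (a : atom) : list tvar :=
  match atime a with
  | Some (TVar t) | Some (TPlus t _) => [t]
  | _ => []
  end.

Record rule := Rule { body : list atom; head : atom }.

Definition wf_rule (r : rule) : Prop :=
  Forall wf_atom (head r :: body r) /\
  (body r <> [] -> pedb (apred (head r)) = false) /\
  incl (ovars_atom (head r)) (flat_map ovars_atom (body r)) /\
  incl (tvars_atom (head r)) (flat_map tvars_atom (body r)).

Definition program := list rule.

Definition wf_program (P : program) : Prop := Forall wf_rule P.

Definition is_fact (a : atom) : Prop :=
  wf_atom a /\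
  Forall (fun t => exists o, t = OConst o) (aobjs a) /\
  match atime a with None => True | Some (TConst _) => True | Some _ => False end.

Definition is_dataset (D : list atom) : Prop :=
  Forall (fun a => is_fact a /\ pedb (apred a) = true) D.

Definition fact_rule (a : atom) : rule := {| body := []; head := a |}.

Definition gatom := (predicate * list obj * option Z)%type.

Definition eval_o (s : ovar -> obj) (t : oterm) : obj :=
  match t with OConst o => o | OVar x => s x end.
Definition eval_t (th : tvar -> Z) (t : tterm) : Z :=
  match t with TConst z => z | TVar x => th x | TPlus x k => (th x + k)%Z end.

Definition ground (s : ovar -> obj) (th : tvar -> Z) (a : atom) : gatom :=
  (apred a, map (eval_o s) (aobjs a), option_map (eval_t th) (atime a)).

Definition sat_rule (I : gatom -> Prop) (r : rule) : Prop :=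
  forall s th, (forall b, In b (body r) -> I (ground s th b)) ->
               I (ground s th (head r)).

Definition entails (P : program) (g : gatom) : Prop :=
  forall I : gatom -> Prop, (forall r, In r P -> sat_rule I r) -> I g.

Definition depends (P : program) (p p' : predicate) : Prop :=
  exists r, In r P /\ apred (head r) = p /\ In p' (map apred (body r)).

Definition nonrecursive (P : program) : Prop :=
  forall p, ~ clos_trans predicate (depends P) p p.

Definition max_list (l : list nat) : nat := fold_left Nat.max l 0%nat.

Definition deps_list (P : program) (p : predicate) : list predicate :=
  flat_map (fun r => if pred_eq_dec (apred (head r)) p
                     then map apred (body r) else []) P.

Fixpoint rank_fuel (P : program) (n : nat) (p : predicate) : nat :=
  match n with
  | O => O
  | S n' => max_list (map (fun p' => S (rank_fuel P n' p')) (deps_list P p))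
  end.

(** rank(p, P); for nonrecursive P the longest dependency chain has
    length <= |P|, so fuel |P| computes the recursive definition exactly. *)
Definition rank (P : program) (p : predicate) : nat := rank_fuel P (length P) p.

Definition preds_of (P : program) : list predicate :=
  flat_map (fun r => map apred (head r :: body r)) P.

Definition rank_prog (P : program) : nat := max_list (map (rank P) (preds_of P)).

Definition rule_tvars (r : rule) : list tvar :=
  flat_map tvars_atom (head r :: body r).

Definition connected_rule (r : rule) : Prop :=
  (forall t1 t2, In t1 (rule_tvars r) -> In t2 (rule_tvars r) -> t1 = t2) /\
  incl (flat_map tvars_atom (body r)) (tvars_atom (head r)).

Definition connected_program (P : program) : Prop := Forall connected_rule P.

Definition delta (s : tterm) : Z := match s with TPlus _ k => k | _ => 0%Z end.

(** radius of a rule (0 for rules without time variables, where all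
    Delta's vanish anyway) *)
Definition rule_radius (r : rule) : nat :=
  match atime (head r) with
  | Some s => max_list (map (fun b => match atime b with
                                      | Some s' => Z.abs_nat (delta s - delta s')
                                      | None => O end) (body r))
  | None => O
  end.

Definition max_radius (P : program) : nat := max_list (map rule_radius P).

Definition rad (P : program) : nat := (length P * max_radius P)%nat.

Definition tpoints (P : program) : list Z :=
  flat_map (fun r => flat_map (fun a => match atime a with
                                        | Some (TConst z) => [z] | _ => [] end)
                              (head r :: body r)) P.

Definition tau0 (tau_a : Z) (P : program) : Z := fold_left Z.max (tpoints P) tau_a.

Record query := Query { qpred : predicate; qprog : program }.

Definition valid_query (Q : query) : Prop :=
  wf_program (qprog Q) /\ NoDup (qprog Q) /\
  pedb (qpred Q) = false /\ In (qpred Q) (preds_of (qprog Q)).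

Definition restrict_dataset (D : list atom) (bound : Z) : list atom :=
  filter (fun a => match atime a with
                   | None => true
                   | Some (TConst z) => Z.leb z bound
                   | Some _ => false end) D.

(* A derivation of [P(o, tau)] never needs atoms above their rank-dependent
   time bound [tau0 + a * (rank(Pi) - rank(p))]: by connectedness, a body
   atom of a rule with a time variable lies at most [a] time steps after the
   head and has strictly smaller rank, while a body atom with a constant time
   lies at most at [tau0].  Hence if [I] is a model of [Pi u D''], the
   interpretation "within the bound implies [I]" is a model of [Pi u D']:
   a fact of [D'] within its bound lies before [tau0 + a * |Pi| = tau0 + rad(Pi)],
   since ranks are at most [|Pi|], so it belongs to [D''].  *)
From Pilot Require Import Defs.
From Stdlib Require Import ZArith List Lia Relations.
Import ListNotations.

Lemma max_list_list_max (l : list nat) : max_list l = list_max l.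
Proof.
  apply fold_symmetric; [exact Nat.max_assoc | intros; apply Nat.max_comm].
Qed.

Lemma le_max_list (l : list nat) (x : nat) : In x l -> (x <= max_list l)%nat.
Proof.
  rewrite max_list_list_max; intros Hx.
  assert (Hall := proj1 (list_max_le l (list_max l)) (le_n _)).
  exact (proj1 (Forall_forall _ _) Hall x Hx).
Qed.

Lemma max_list_lub (l : list nat) (m : nat) :
  (forall x, In x l -> (x <= m)%nat) -> (max_list l <= m)%nat.
Proof. rewrite max_list_list_max; intros H; apply list_max_le, Forall_forall, H. Qed.

Lemma max_list_attained (l : list nat) (m : nat) :
  (0 < m <= max_list l)%nat -> exists x, In x l /\ (m <= x)%nat.
Proof.
  rewrite max_list_list_max; induction l as [|a l IHl]; intros Hm; [cbn in Hm; lia|].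
  change (list_max (a :: l)) with (Nat.max a (list_max l)) in Hm.
  destruct (Nat.max_spec a (list_max l)) as [[_ E]|[_ E]]; rewrite E in Hm.
  - destruct (IHl Hm) as [x [Hx Hmx]]; exists x; split; [right|]; assumption.
  - exists a; split; [left; reflexivity | apply Hm].
Qed.

Lemma fold_left_Zmax_ub (l : list Z) (a z : Z) :
  (z <= a \/ In z l)%Z -> (z <= fold_left Z.max l a)%Z.
Proof.
  revert a; induction l as [|b l IHl]; cbn; intros a Hz; [destruct Hz; [lia | easy]|].
  apply IHl; destruct Hz as [Hz|[<-|Hz]]; auto; lia.
Qed.

Lemma tpoints_le_tau0 (tau_a : Z) (P : program) (z : Z) :
  In z (tpoints P) -> (z <= tau0 tau_a P)%Z.
Proof. intros Hz; apply fold_left_Zmax_ub; auto. Qed.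

Lemma depends_iff_in_deps_list (P : program) (p q : predicate) :
  depends P p q <-> In q (deps_list P p).
Proof.
  unfold depends, deps_list; rewrite in_flat_map; split.
  - intros [r [Hr [<- Hq]]]; exists r; split; auto.
    destruct pred_eq_dec as [_|]; [exact Hq | congruence].
  - intros [r [Hr Hq]]; destruct pred_eq_dec as [E|]; [eauto | contradiction].
Qed.

(* [dep_chain P p l]: [l] lists the sources of a dependency path of
   [length l] edges starting at [p]. *)
Inductive dep_chain (P : program) : predicate -> list predicate -> Prop :=
| dep_chain_nil p : dep_chain P p []
| dep_chain_cons p q l : depends P p q -> dep_chain P q l -> dep_chain P p (p :: l).

Lemma dep_chain_reach (P : program) (q x : predicate) (l : list predicate) :
  dep_chain P q l -> In x l -> clos_refl_trans _ (depends P) q x.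
Proof.
  induction 1 as [|p q' l Hpq _ IH]; cbn; [easy|].
  intros [<-|Hx]; [apply rt_refl | eapply rt_trans; [apply rt_step, Hpq | auto]].
Qed.

Lemma dep_chain_NoDup (P : program) (p : predicate) (l : list predicate) :
  nonrecursive P -> dep_chain P p l -> NoDup l.
Proof.
  intros HN; induction 1 as [|p q l Hpq Hl IH]; constructor; auto.
  intros Hp; apply (HN q), clos_rt_t with p; [eapply dep_chain_reach; eauto | apply t_step, Hpq].
Qed.

Lemma dep_chain_length_le (P : program) (p : predicate) (l : list predicate) :
  nonrecursive P -> dep_chain P p l -> (length l <= length P)%nat.
Proof.
  intros HN Hl; rewrite <- (length_map (fun r => apred (Defs.head r)) P).
  apply NoDup_incl_length; [eapply dep_chain_NoDup; eauto|].
  clear HN; induction Hl as [|p q l [r [Hr [Hh _]]] _ IH]; intros x; cbn; [easy|].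
  intros [<-|Hx]; [apply in_map_iff; eauto | auto].
Qed.

Lemma dep_chain_of_rank_fuel (P : program) (n : nat) (p : predicate) (j : nat) :
  (j <= rank_fuel P n p)%nat -> exists l, dep_chain P p l /\ length l = j.
Proof.
  revert p j; induction n as [|n IHn]; intros p [|j] Hj; cbn in Hj;
    try (exists []; split; [constructor | reflexivity]); [lia|].
  destruct (max_list_attained _ (S j) (conj (Nat.lt_0_succ j) Hj)) as [x [Hx Hjx]].
  apply in_map_iff in Hx as [q [<- Hq]].
  destruct (IHn q j) as [l [Hl <-]]; [lia|].
  exists (p :: l); split; [econstructor; [apply depends_iff_in_deps_list|]; eauto | reflexivity].
Qed.

Lemma rank_fuel_of_dep_chain (P : program) (n : nat) (p : predicate) (l : list predicate) :
  dep_chain P p l -> (length l <= n)%nat -> (length l <= rank_fuel P n p)%nat.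
Proof.
  revert p l; induction n as [|n IHn]; intros p l Hl Hn; cbn; [lia|].
  destruct Hl as [|p q l Hpq Hl]; cbn in *; [lia|].
  apply Nat.le_trans with (S (rank_fuel P n q)); [apply le_n_S, IHn; auto; lia|].
  apply le_max_list, in_map_iff; exists q; split; [reflexivity|].
  apply depends_iff_in_deps_list, Hpq.
Qed.

Lemma rank_fuel_le_fuel (P : program) (n : nat) (p : predicate) : (rank_fuel P n p <= n)%nat.
Proof.
  revert p; induction n as [|n IHn]; intros p; cbn; [lia|].
  apply max_list_lub; intros x Hx; apply in_map_iff in Hx as [q [<- _]].
  apply le_n_S, IHn.
Qed.

Lemma rank_body_lt_head (P : program) (r : rule) (b : atom) :
  nonrecursive P -> In r P -> In b (body r) -> (rank P (apred b) < rank P (apred (Defs.head r)))%nat.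
Proof.
  intros HN Hr Hb; unfold rank.
  destruct (dep_chain_of_rank_fuel P (length P) (apred b) _ (le_n _)) as [l [Hl El]].
  assert (Hhl : dep_chain P (apred (Defs.head r)) (apred (Defs.head r) :: l)).
  { econstructor; [exists r; split; [|split]; auto; apply in_map, Hb | exact Hl]. }
  pose proof (rank_fuel_of_dep_chain P _ _ _ Hhl (dep_chain_length_le P _ _ HN Hhl)).
  cbn in *; lia.
Qed.

Lemma rank_le_rank_prog (P : program) (p : predicate) :
  In p (preds_of P) -> (rank P p <= rank_prog P)%nat.
Proof. intros Hp; apply le_max_list, in_map, Hp. Qed.

Lemma body_pred_in_preds_of (P : program) (r : rule) (b : atom) :
  In r P -> In b (body r) -> In (apred b) (preds_of P).
Proof. intros Hr Hb; apply in_flat_map; exists r; split; [exact Hr | right; apply in_map, Hb]. Qed.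

Lemma rank_prog_le_length (P : program) : (rank_prog P <= length P)%nat.
Proof.
  apply max_list_lub; intros x Hx; apply in_map_iff in Hx as [p [<- _]].
  apply rank_fuel_le_fuel.
Qed.

Lemma radius_body_le (P : program) (r : rule) (b : atom) (sh sb : tterm) :
  In r P -> In b (body r) -> atime (Defs.head r) = Some sh -> atime b = Some sb ->
  (Z.abs_nat (delta sh - delta sb) <= max_radius P)%nat.
Proof.
  intros Hr Hb Hh Hbt; apply Nat.le_trans with (rule_radius r).
  - unfold rule_radius; rewrite Hh; apply le_max_list, in_map_iff.
    exists b; rewrite Hbt; auto.
  - apply le_max_list, in_map, Hr.
Qed.

Lemma connected_body_time_le (P : program) (r : rule) (b : atom) (t : tvar) (th : tvar -> Z) :
  connected_program P -> In r P -> In b (body r) -> In t (tvars_atom b) ->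
  exists sh sb, atime (Defs.head r) = Some sh /\ atime b = Some sb /\
    (eval_t th sb <= eval_t th sh + Z.of_nat (max_radius P))%Z.
Proof.
  intros HC Hr Hb Ht.
  assert (Hth : In t (tvars_atom (Defs.head r))).
  { apply (proj2 (proj1 (Forall_forall _ _) HC r Hr)), in_flat_map; eauto. }
  unfold tvars_atom in Ht, Hth.
  destruct (atime b) as [sb|] eqn:Eb; [|easy].
  destruct (atime (Defs.head r)) as [sh|] eqn:Eh; [|easy].
  exists sh, sb; do 2 (split; [reflexivity|]).
  pose proof (radius_body_le P r b sh sb Hr Hb Eh Eb) as Hrad.
  apply Nat2Z.inj_le in Hrad; rewrite Nat2Z.inj_abs_nat in Hrad.
  destruct sb, sh; cbn in *; try contradiction;
    destruct Ht as [<-|[]], Hth as [->|[]]; lia.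
Qed.

Definition rank_time_bound (T0 : Z) (P : program) (p : predicate) : Z :=
  (T0 + Z.of_nat (max_radius P) * (Z.of_nat (rank_prog P) - Z.of_nat (rank P p)))%Z.

Definition below_rank_bound (T0 : Z) (P : program) (g : gatom) : Prop :=
  match g with
  | (p, _, Some z) => (z <= rank_time_bound T0 P p)%Z
  | (_, _, None) => True
  end.

Lemma below_rank_bound_body (T0 : Z) (P : program) (r : rule) (b : atom)
    (s : ovar -> obj) (th : tvar -> Z) :
  nonrecursive P -> connected_program P -> (forall z, In z (tpoints P) -> z <= T0)%Z ->
  In r P -> In b (body r) ->
  below_rank_bound T0 P (ground s th (Defs.head r)) -> below_rank_bound T0 P (ground s th b).
Proof.
  intros HN HC HT Hr Hb Hh; unfold below_rank_bound, rank_time_bound, ground in *; cbn in *.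
  pose proof (Nat2Z.is_nonneg (max_radius P)).
  assert (Hrb := rank_le_rank_prog P (apred b) (body_pred_in_preds_of P r b Hr Hb)).
  apply Nat2Z.inj_le in Hrb.
  destruct (atime b) as [[z|t|t k]|] eqn:Eb; cbn; [| | |easy].
  { assert (Hz : (z <= T0)%Z).
    { apply HT; unfold tpoints; apply in_flat_map; exists r; split; [exact Hr|].
      apply in_flat_map; exists b; split; [right; exact Hb | rewrite Eb; left; reflexivity]. }
    nia. }
  (* the head carries the same time variable, one rank higher *)
  all: assert (Hrank := rank_body_lt_head P r b HN Hr Hb); apply Nat2Z.inj_lt in Hrank.
  all: destruct (connected_body_time_le P r b t th HC Hr Hb)
         as [sh [sb [Eh [Eb' Hle]]]]; [unfold tvars_atom; rewrite Eb; left; reflexivity|].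
  all: rewrite Eh in Hh; rewrite Eb in Eb'; injection Eb' as <-; cbn in *; nia.
Qed.

Lemma rank_time_bound_le_rad (T0 : Z) (P : program) (p : predicate) :
  (rank_time_bound T0 P p <= T0 + Z.of_nat (rad P))%Z.
Proof.
  unfold rank_time_bound, rad; rewrite Nat2Z.inj_mul.
  pose proof (rank_prog_le_length P) as H; apply Nat2Z.inj_le in H.
  pose proof (Nat2Z.is_nonneg (max_radius P)); pose proof (Nat2Z.is_nonneg (rank P p)).
  nia.
Qed.

Lemma in_restrict_dataset_below_rank_bound (T0 : Z) (P : program) (D : list atom) (f : atom)
    (s : ovar -> obj) (th : tvar -> Z) :
  is_fact f -> In f D -> below_rank_bound T0 P (ground s th f) ->
  In f (restrict_dataset D (T0 + Z.of_nat (rad P))).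
Proof.
  intros [_ [_ Hf]] HfD Hb; apply filter_In; split; [exact HfD|].
  unfold below_rank_bound, ground in Hb.
  destruct (atime f) as [[z|t|t k]|]; try contradiction; [|reflexivity].
  cbn [option_map eval_t] in Hb; apply Z.leb_le; pose proof (rank_time_bound_le_rad T0 P (apred f)); lia.
Qed.

Lemma sat_rule_guard (I B : gatom -> Prop) (r : rule) :
  sat_rule I r ->
  (forall s th, B (ground s th (Defs.head r)) -> forall b, In b (body r) -> B (ground s th b)) ->
  sat_rule (fun g => B g -> I g) r.
Proof. intros HI HB s th Hbody Hh; apply HI; intros b Hb; apply Hbody, HB; auto. Qed.

Theorem mainTheorem11 :
  forall (Q : query) (tau_a : Z),
    valid_query Q -> nonrecursive (qprog Q) -> connected_program (qprog Q) ->
    forall (D' : list atom) (P : predicate) (os : list obj) (tau : Z),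
      is_dataset D' ->
      ptemporal P = true -> length os = parity P ->
      (tau <= tau0 tau_a (qprog Q)
               + Z.of_nat (max_radius (qprog Q))
                 * (Z.of_nat (rank_prog (qprog Q)) - Z.of_nat (rank (qprog Q) P)))%Z ->
      entails (qprog Q ++ map fact_rule D') (P, os, Some tau) ->
      entails (qprog Q ++ map fact_rule
                 (restrict_dataset D' (tau0 tau_a (qprog Q) + Z.of_nat (rad (qprog Q)))%Z))
              (P, os, Some tau).
Proof.
  intros Q tau_a _ HN HC D' P os tau HD _ _ Htau Hent I HI.
  set (T0 := tau0 tau_a (qprog Q)) in *.
  apply (Hent (fun g => below_rank_bound T0 (qprog Q) g -> I g)); [|exact Htau].
  intros r Hr; apply in_app_or in Hr as [Hr|Hr].
  - apply sat_rule_guard; [apply HI, in_or_app; left; exact Hr|].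
    intros s th Hh b Hb; eapply below_rank_bound_body; eauto.
    intros z Hz; apply tpoints_le_tau0, Hz.
  - apply in_map_iff in Hr as [f [<- Hf]]; intros s th _ Hh.
    apply (HI (fact_rule f)); [|intros b []].
    apply in_or_app; right; apply in_map.
    apply in_restrict_dataset_below_rank_bound with s th; [|exact Hf|exact Hh].
    exact (proj1 (proj1 (Forall_forall _ _) HD f Hf)).
Qed.
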